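(* There exists a CF program $\mathtt{p}$ that terminates on every input $x\in\{0,1\}^*$ and whose native running time $\mathit{time}_{\mathtt{p}}(x)$ is exponential in $|x|$ (in particular, not bounded by any polynomial in $|x|$).
   Context: CF (''cons-free'') is a first-order, call-by-value functional language over booleans and bit lists $\{0,1\}^*$. A program is a finite sequence of mutually recursive function definitions $\mathtt{f\ x1 \dots xm = e}$ ($m\ge0$), the first being a one-argument entry function. Expressions are $\mathtt{True}$, $\mathtt{False}$, $\mathtt{[]}$, variables, base calls $\mathtt{not\ e}$, $\mathtt{null\ e}$, $\mathtt{head\ e}$, $\mathtt{tail\ e}$, conditionals $\mathtt{if\ e_0\ then\ e_1\ else\ e_2}$, and calls $\mathtt{f\ e_1\dots e_m}$ of defined functions; there are no list constructors. Semantics is standard big-step call-by-value evaluation given by inference rules deriving $\mathtt{p},\rho\vdash\mathtt{e}\to v$ (a call evaluates all arguments, then the body in the new environment; a conditional evaluates its test, then only the selected branch). The derivation tree for the run on input $x$ is the computation tree $\mathcal{T}^{\mathtt{p},x}$, and the native running time $\mathit{time}_{\mathtt{p}}(x)$ is the number of nodes of $\mathcal{T}^{\mathtt{p},x}$. *)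

From Stdlib Require Import List Arith Lia.
Import ListNotations.

(* Values: booleans and bit lists {0,1}^* (bits encoded as bool, 1 = true). *)
Inductive value : Type :=
| VBool : bool -> value
| VList : list bool -> value.

(* Variables are de Bruijn indices into the parameter list
   of the enclosing function definition (x1 = index 0, ...).
   Defined functions are referred to by their position in the program. *)
Inductive expr : Type :=
| ETrue : expr
| EFalse : expr
| ENil : expr
| EVar : nat -> expr
| ENot : expr -> expr
| ENull : expr -> expr
| EHead : expr -> expr
| ETail : expr -> expr
| EIf : expr -> expr -> expr -> expr
| ECall : nat -> list expr -> expr.

(* A definition  f x1 ... xm = e  is the pair (m, e). *)
Definition fundef : Type := (nat * expr)%type.
(* A program is a finite sequence of definitions; the first is the entry. *)
Definition program : Type := list fundef.

Fixpoint wf_expr (p : program) (m : nat) (e : expr) : Prop :=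
  match e with
  | ETrue | EFalse | ENil => True
  | EVar i => i < m
  | ENot e | ENull e | EHead e | ETail e => wf_expr p m e
  | EIf e0 e1 e2 => wf_expr p m e0 /\ wf_expr p m e1 /\ wf_expr p m e2
  | ECall f es =>
      (exists d, nth_error p f = Some d /\ fst d = length es)
      /\ (fix wfl (l : list expr) : Prop :=
            match l with [] => True | e' :: l' => wf_expr p m e' /\ wfl l' end) es
  end.

Definition wf_program (p : program) : Prop :=
  (exists e, hd_error p = Some (1, e)) /\
  forall f m e, nth_error p f = Some (m, e) -> wf_expr p m e.

(* Big-step call-by-value semantics  p, rho |- e -> v  ;  the last index n
   is the number of nodes of the derivation (computation) tree. *)
Inductive eval (p : program) : list value -> expr -> value -> nat -> Prop :=
| ev_true rho : eval p rho ETrue (VBool true) 1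
| ev_false rho : eval p rho EFalse (VBool false) 1
| ev_nil rho : eval p rho ENil (VList []) 1
| ev_var rho i v : nth_error rho i = Some v -> eval p rho (EVar i) v 1
| ev_not rho e b n :
    eval p rho e (VBool b) n -> eval p rho (ENot e) (VBool (negb b)) (S n)
| ev_null rho e l n :
    eval p rho e (VList l) n ->
    eval p rho (ENull e) (VBool (match l with [] => true | _ => false end)) (S n)
| ev_head rho e b l n :
    eval p rho e (VList (b :: l)) n -> eval p rho (EHead e) (VBool b) (S n)
| ev_tail rho e b l n :
    eval p rho e (VList (b :: l)) n -> eval p rho (ETail e) (VList l) (S n)
| ev_if_true rho e0 e1 e2 v n0 n1 :
    eval p rho e0 (VBool true) n0 -> eval p rho e1 v n1 ->
    eval p rho (EIf e0 e1 e2) v (S (n0 + n1))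
| ev_if_false rho e0 e1 e2 v n0 n2 :
    eval p rho e0 (VBool false) n0 -> eval p rho e2 v n2 ->
    eval p rho (EIf e0 e1 e2) v (S (n0 + n2))
| ev_call rho f es vs m body v na nb :
    nth_error p f = Some (m, body) -> length es = m ->
    eval_args p rho es vs na -> eval p vs body v nb ->
    eval p rho (ECall f es) v (S (na + nb))
with eval_args (p : program) : list value -> list expr -> list value -> nat -> Prop :=
| ea_nil rho : eval_args p rho [] [] 0
| ea_cons rho e es v vs n ns :
    eval p rho e v n -> eval_args p rho es vs ns ->
    eval_args p rho (e :: es) (v :: vs) (n + ns).

(* The run of p on input x: the body of the entry function evaluated in the
   environment [x1 := x].  run p x v t : the run terminates with value v and
   its computation tree has t nodes, i.e. time_p(x) = t. *)
Definition run (p : program) (x : list bool) (v : value) (t : nat) : Prop :=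
  exists e, hd_error p = Some (1, e) /\ eval p [VList x] e v t.

From Stdlib Require Import List Arith Lia.
Import ListNotations.

(* The entry function
     f x = if null x then True else if f (tail x) then f (tail x) else False
   always returns True and, on a nonempty list, calls itself twice on the tail,
   so its computation tree doubles with every input bit: it has exactly
   14 * 2^|x| - 10 nodes. *)

Definition twice_body : expr :=
  EIf (ENull (EVar 0)) ETrue
      (EIf (ECall 0 [ETail (EVar 0)]) (ECall 0 [ETail (EVar 0)]) EFalse).

Definition twice_prog : program := [(1, twice_body)].

Fixpoint twice_time (n : nat) : nat :=
  match n with 0 => 4 | S n => 10 + 2 * twice_time n end.

Lemma twice_time_closed n : twice_time n + 10 = 14 * 2 ^ n.
Proof. induction n; simpl in *; lia. Qed.

Lemma twice_time_ge n : 2 ^ n <= twice_time n.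
Proof. induction n; simpl; lia. Qed.

Lemma twice_time_le n : twice_time n <= 14 ^ (n + 1).
Proof.
  pose proof (twice_time_closed n).
  assert (2 ^ n <= 14 ^ n) by (apply Nat.pow_le_mono_l; lia).
  rewrite Nat.add_1_r; simpl; lia.
Qed.

Lemma wf_twice_prog : wf_program twice_prog.
Proof.
  split.
  - exists twice_body; reflexivity.
  - intros [|[|f]] m e Hf; try discriminate.
    injection Hf as <- <-; simpl.
    assert (Hcall : exists d, nth_error twice_prog 0 = Some d /\ fst d = 1)
      by (exists (1, twice_body); split; reflexivity).
    repeat split; auto.
Qed.

Lemma eval_unary_call p rho f body e v w n m :
  nth_error p f = Some (1, body) ->
  eval p rho e v n -> eval p [v] body w m ->
  eval p rho (ECall f [e]) w (S (n + m)).
Proof.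
  intros Hf He Hbody.
  rewrite <- (Nat.add_0_r n).
  eapply ev_call; eauto.
  apply ea_cons; [exact He | apply ea_nil].
Qed.

Lemma eval_twice_body l :
  eval twice_prog [VList l] twice_body (VBool true) (twice_time (length l)).
Proof.
  induction l as [|b l IH].
  - apply (ev_if_true _ _ _ _ _ _ 2 1).
    + apply (ev_null _ _ _ []), ev_var; reflexivity.
    + apply ev_true.
  - assert (Hnull : eval twice_prog [VList (b :: l)] (ENull (EVar 0)) (VBool false) 2)
      by (apply (ev_null _ _ _ (b :: l)), ev_var; reflexivity).
    assert (Hrec : eval twice_prog [VList (b :: l)] (ECall 0 [ETail (EVar 0)])
                     (VBool true) (S (2 + twice_time (length l)))).
    { apply eval_unary_call with (body := twice_body) (v := VList l); [reflexivity | | exact IH].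
      apply (ev_tail _ _ _ b), ev_var; reflexivity. }
    replace (twice_time (length (b :: l)))
      with (S (2 + S (S (2 + twice_time (length l)) + S (2 + twice_time (length l)))))
      by (simpl; lia).
    apply ev_if_false; [exact Hnull | apply ev_if_true; exact Hrec].
Qed.

Theorem theorem4 :
  exists p : program, wf_program p /\
    exists c : nat,
      forall x : list bool, exists v t,
        run p x v t /\ 2 ^ length x <= t /\ t <= c ^ (length x + 1).
Proof.
  exists twice_prog; split; [exact wf_twice_prog |].
  exists 14; intro x.
  exists (VBool true), (twice_time (length x)).
  split; [| split; [apply twice_time_ge | apply twice_time_le]].
  exists twice_body; split; [reflexivity | apply eval_twice_body].
Qed.
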